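(* Every finite dimensional complex Banach space has the $\mathbf{L}_{p,p}$-nu.
   Context: For a Banach space $X$: $\Pi(X)=\{(x,x^* )\in S_X\times S_{X^*}: x^*(x)=1\}$; for $T\in\mathcal{L}(X)$ (bounded linear operators on $X$), $v(T)=\sup\{|x^*(Tx)|:(x,x^* )\in\Pi(X)\}$. $X$ has the $\mathbf{L}_{p,p}$-nu if for every $\varepsilon>0$ and $(x,x^* )\in\Pi(X)$ there is $\eta(\varepsilon,(x,x^* ))>0$ such that whenever $T\in\mathcal{L}(X)$ with $v(T)=1$ satisfies $|x^*(Tx)|>1-\eta(\varepsilon,(x,x^* ))$, there is $S\in\mathcal{L}(X)$ with $v(S)=1$, $|x^*(Sx)|=1$ and $\|S-T\|<\varepsilon$. *)

From HB Require Import structures.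
From mathcomp Require Import all_boot all_order all_algebra.
From mathcomp Require Import all_classical all_reals all_analysis.
From mathcomp Require Import complex.
Set Implicit Arguments. Unset Strict Implicit. Unset Printing Implicit Defensive.
Import Order.TTheory GRing.Theory Num.Theory ComplexField.
Import numFieldNormedType.Exports.
Local Open Scope classical_set_scope.
Local Open Scope ring_scope.

Section BanachDefs.
Variable R : realType.
Local Notation C := R[i].
Variable X : normedModType C.

(* real-valued norm: the norm of a normedModType over C takes (real, >= 0)
   values in C; we read it in R via the real part *)
Definition rnorm (x : X) : R := complex.Re `|x|.
Definition rabsC (z : C) : R := complex.Re `|z|.

Definition finite_dim : Prop :=
  exists s : seq X, forall x : X,
    exists c : 'I_(size s) -> C, x = \sum_(i < size s) c i *: s`_i.

Definition is_bounded_op (T : X -> X) : Prop :=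
  (forall (a : C) (x y : X), T (a *: x + y) = a *: T x + T y) /\
  exists M : R, forall x, rnorm (T x) <= M * rnorm x.

Definition is_bounded_functional (f : X -> C) : Prop :=
  (forall (a : C) (x y : X), f (a *: x + y) = a * f x + f y) /\
  exists M : R, forall x, rabsC (f x) <= M * rnorm x.

Definition opnorm (T : X -> X) : R :=
  sup [set rnorm (T x) | x in [set x : X | rnorm x <= 1]].
Definition fnorm (f : X -> C) : R :=
  sup [set rabsC (f x) | x in [set x : X | rnorm x <= 1]].

Definition inPi (x : X) (f : X -> C) : Prop :=
  rnorm x = 1 /\ is_bounded_functional f /\ fnorm f = 1 /\ f x = 1.

Definition numrad (T : X -> X) : R :=
  sup [set r : R | exists (x : X) (f : X -> C), inPi x f /\ r = rabsC (f (T x))].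

Definition Lpp_nu : Prop :=
  forall (eps : R), 0 < eps ->
  forall (x : X) (f : X -> C), inPi x f ->
  exists eta : R, 0 < eta /\
    forall T : X -> X, is_bounded_op T -> numrad T = 1 ->
      rabsC (f (T x)) > 1 - eta ->
      exists S : X -> X, [/\ is_bounded_op S, numrad S = 1,
        rabsC (f (S x)) = 1 & opnorm (fun y => S y - T y) < eps].

End BanachDefs.

From HB Require Import structures.
From mathcomp Require Import all_boot all_order all_algebra.
From mathcomp Require Import all_classical all_reals all_analysis.
From mathcomp Require Import complex.
From mathcomp Require Import ring lra.
Import numFieldNormedType.Exports.
Set Implicit Arguments. Unset Strict Implicit. Unset Printing Implicit Defensive.
Import Order.TTheory GRing.Theory Num.Theory ComplexField.
Local Open Scope classical_set_scope.
Local Open Scope ring_scope.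
Local Open Scope complex_scope.

(* Fix a basis e_0, ..., e_{n-1} of X.  Every bounded operator T is determined
   by the n^2 complex coordinates of the vectors T e_j, i.e. by a vector r of
   the real space E = R^(2 n^2); write Phi r for the operator with parameters
   r.  Given (x0, f0) in Pi(X), the map p r := v(Phi r) is a seminorm on E
   (bounded by a multiple of the euclidean norm) and psi r := |f0 (Phi r x0)|
   is Lipschitz, below p, and invariant under translations by ker p.  The
   property L_{p,p}-nu then reduces to a statement about finite dimensional
   real spaces, proved by compactness: near-maxima of psi on the p-unit sphere
   are close to exact maxima ([seminorm_peak_stability]).  Compactness modulo
   ker p comes from the coercivity of p on a complement of its kernel
   ([seminorm_coercive]), which is also used to bound the coordinates of a
   vector of X by its norm ([coord_bound]).  Finally the distance between
   parameters controls the operator norm of the difference of operators. *)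

Section RealNorm.
Variable R : realType.
Variable X : normedModType R[i].

Lemma normX_real (x : X) : `|x| = (rnorm x)%:C.
Proof. by rewrite /rnorm RRe_real // ger0_real. Qed.

Lemma normC_real (z : R[i]) : `|z| = (rabsC z)%:C.
Proof. by rewrite /rabsC RRe_real // ger0_real. Qed.

Lemma rnorm_ge0 (x : X) : 0 <= rnorm x.
Proof. by have := normr_ge0 x; rewrite normX_real -(rmorph0 (real_complex R)) lecR. Qed.

Lemma rabsC_ge0 (z : R[i]) : 0 <= rabsC z.
Proof. by have := normr_ge0 z; rewrite normC_real -(rmorph0 (real_complex R)) lecR. Qed.

Lemma rnorm0 : rnorm (0 : X) = 0.
Proof. by rewrite /rnorm normr0. Qed.

Lemma rnorm_eq0 (x : X) : rnorm x = 0 -> x = 0.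
Proof. by move=> h; apply/normr0_eq0; rewrite normX_real h. Qed.

Lemma rabsC_eq0 (z : R[i]) : rabsC z = 0 -> z = 0.
Proof. by move=> h; apply/normr0_eq0; rewrite normC_real h. Qed.

Lemma rnormD (x y : X) : rnorm (x + y) <= rnorm x + rnorm y.
Proof. by have := ler_normD x y; rewrite !normX_real -rmorphD lecR. Qed.

Lemma rabsCD (a b : R[i]) : rabsC (a + b) <= rabsC a + rabsC b.
Proof. by have := ler_normD a b; rewrite !normC_real -rmorphD lecR. Qed.

Lemma rnormZ (a : R[i]) (x : X) : rnorm (a *: x) = rabsC a * rnorm x.
Proof. by apply: complexI; rewrite rmorphM -normX_real normrZ normX_real normC_real. Qed.

Lemma rabsCM (a b : R[i]) : rabsC (a * b) = rabsC a * rabsC b.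
Proof. by apply: complexI; rewrite rmorphM -!normC_real normrM. Qed.

Lemma rabsCN (a : R[i]) : rabsC (- a) = rabsC a.
Proof. by rewrite /rabsC normrN. Qed.

Lemma rabsC_real (a : R) : rabsC a%:C = `|a|.
Proof. by rewrite /rabsC normc_def /= expr0n /= addr0 sqrtr_sqr. Qed.

Lemma rabsC_dist (a b : R[i]) : `|rabsC a - rabsC b| <= rabsC (a - b).
Proof.
rewrite ler_norml; apply/andP; split.
  by have := rabsCD (b - a) a; rewrite subrK -opprB rabsCN; lra.
by have := rabsCD (a - b) b; rewrite subrK; lra.
Qed.

Lemma rabsC_ReIm (z : R[i]) : rabsC z <= `|complex.Re z| + `|complex.Im z|.
Proof.
rewrite /rabsC normc_def /=.
rewrite -[X in _ <= X]ger0_norm ?addr_ge0 // -sqrtr_sqr ler_sqrt ?sqr_ge0 //.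
rewrite sqrrD -[complex.Re z ^+ 2](real_normK (num_real _)).
rewrite -[complex.Im z ^+ 2](real_normK (num_real _)).
by rewrite -addrA lerD2l lerDr mulrn_wge0 ?mulr_ge0.
Qed.

Lemma rnorm_sum m (F : 'I_m -> X) :
  rnorm (\sum_(i < m) F i) <= \sum_(i < m) rnorm (F i).
Proof.
apply: (big_ind2 (fun a b => rnorm a <= b)) => //; first by rewrite rnorm0.
by move=> a b a' b' h1 h2; apply: le_trans (rnormD _ _) (lerD h1 h2).
Qed.

End RealNorm.

Section RowTopology.
Variables (R : realType) (N : nat).
Local Notation E := 'rV[R]_N.

Lemma lipschitz_continuous (g : E -> R) (L : R) : 0 <= L ->
  (forall r s, `|g r - g s| <= L * `|r - s|) -> continuous g.
Proof.
move=> L0 H r; apply/(@cvgrPdist_le _ _ _ _ (nbhs_filter r)) => e e0.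
have L1 : 0 < L + 1 by rewrite ltr_wpDl.
have d0 : 0 < e / (L + 1) by rewrite divr_gt0.
apply: filterS (nbhsx_ballx r _ d0) => s; rewrite -ball_normE /= => hs.
apply: (le_trans (H r s)); apply: (le_trans (ler_wpM2l L0 (ltW hs))).
by rewrite mulrA ler_pdivrMr // [L * e]mulrC ler_pM2l // lerDl.
Qed.

Lemma dist_continuous (r : E) : continuous (fun k : E => `|r - k|).
Proof.
apply: (@lipschitz_continuous _ 1) => // a b; rewrite mul1r.
apply: le_trans (ler_dist_dist _ _) _.
by rewrite opprB addrC addrA subrK -normrN opprB.
Qed.

Lemma bounded_in_ball (M : R) (A : set E) :
  A `<=` [set v | `|v| <= M] -> bounded_set A.
Proof.
move=> hA; rewrite /= /bounded_near; near=> M' => t At /=.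
apply: le_trans (hA t At) _; near: M'; exact: nbhs_pinfty_ge (num_real _).
Unshelve. all: by end_near. Qed.

Lemma closed_ball_norm (M : R) : closed [set v : E | `|v| <= M].
Proof.
have -> : [set v : E | `|v| <= M] = (fun v : E => `|v|) @^-1` [set y | y <= M] by [].
apply: (continuous_closedP _).1; last exact: closed_le.
by move=> v; exact: norm_continuous.
Qed.

Lemma closed_far_from (s : E) (eps : R) : closed [set r : E | eps <= `|s - r|].
Proof.
have -> : [set r : E | eps <= `|s - r|] = (fun r : E => `|s - r|) @^-1` [set y | eps <= y].
  by [].
by apply: (continuous_closedP _).1; [exact: dist_continuous | exact: closed_ge].
Qed.

End RowTopology.

Section Seminorm.
Variables (R : realType) (N : nat).
Local Notation E := 'rV[R]_N.
Variables (p : E -> R) (L : R).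
Hypothesis L_ge0 : 0 <= L.
Hypothesis pD : forall r s, p (r + s) <= p r + p s.
Hypothesis pZ : forall (a : R) r, p (a *: r) = `|a| * p r.
Hypothesis pL : forall r, p r <= L * `|r|.

Lemma seminorm0 : p 0 = 0.
Proof. by rewrite -(scale0r (0 : E)) pZ normr0 mul0r. Qed.

Lemma seminormN r : p (- r) = p r.
Proof. by rewrite -scaleN1r pZ normrN normr1 mul1r. Qed.

Lemma seminorm_ge0 r : 0 <= p r.
Proof. by have := pD r (- r); rewrite subrr seminorm0 seminormN; lra. Qed.

Lemma seminorm_lipschitz r s : `|p r - p s| <= L * `|r - s|.
Proof.
have pB u v : p u - p v <= p (u - v) by have := pD (u - v) v; rewrite subrK; lra.
rewrite ler_norml; apply/andP; split.
  by have := pB s r; have := pL (s - r); rewrite -opprB seminormN normrN; lra.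
by have := pB r s; have := pL (r - s); lra.
Qed.

Lemma seminormDker k r : p k = 0 -> p (r + k) = p r.
Proof.
move=> pk; apply/eqP; rewrite eq_le; apply/andP; split.
  by have := pD r k; lra.
by have := pD (r + k) (- k); rewrite seminormN pk addrK; lra.
Qed.

Lemma kerDZ k k' (t : R) : p k = 0 -> p k' = 0 -> p (k + t *: k') = 0.
Proof.
move=> pk pk'; apply/eqP; rewrite eq_le seminorm_ge0 andbT.
by have := pD k (t *: k'); rewrite pZ pk pk' mulr0 addr0.
Qed.

Lemma closed_ker : closed [set k | p k = 0].
Proof.
have -> : [set k | p k = 0] = p @^-1` [set 0] by [].
apply: (continuous_closedP p).1; last exact: closed_eq.
exact: lipschitz_continuous L_ge0 seminorm_lipschitz.
Qed.

(* The kernel of p is a closed subspace, so each r has a nearest point in it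
   (a minimiser of the distance over a compact piece of the kernel). *)
Lemma nearest_ker r :
  exists2 k, p k = 0 & forall k', p k' = 0 -> `|r - k| <= `|r - k'|.
Proof.
pose A := [set k | p k = 0] `&` [set v : E | `|v| <= 2 * `|r|].
have n2 : `|0 : E| <= 2 * `|r| by rewrite normr0 mulr_ge0.
have A0 : A !=set0 by exists 0; split; rewrite /= ?seminorm0.
have cA : compact A.
  apply: bounded_closed_compact; first by apply: (@bounded_in_ball _ _ (2 * `|r|)) => v [].
  by apply: closedI; [exact: closed_ker | exact: closed_ball_norm].
have [k kA kmin] := EVT_min_rV A0 cA (continuous_subspaceT (@dist_continuous _ _ r)).
move: kA; rewrite inE => -[pk kn]; exists k => // k' pk'.
have [h|h] := leP `|k'| (2 * `|r|); first by apply: kmin; rewrite inE.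
have := kmin 0; rewrite inE subr0 => /(_ (conj seminorm0 n2)) h0.
by have := lerB_dist k' r; rewrite distrC; lra.
Qed.

(* Unit vectors at distance at least 1 from ker p: p has a positive minimum
   on this compact set, which yields the coercivity of p modulo its kernel. *)
Definition far_units := [set u : E | `|u| = 1 /\ forall k, p k = 0 -> 1 <= `|u - k|].

Lemma far_units_residual r k : p k = 0 ->
  (forall k', p k' = 0 -> `|r - k| <= `|r - k'|) ->
  r - k != 0 -> far_units (`|r - k|^-1 *: (r - k)).
Proof.
move=> pk kmin nz; have t0 : 0 < `|r - k| by rewrite normr_gt0.
split; first by rewrite normrZ normfV normr_id mulVf // normr_eq0.
move=> k' pk'.
have -> : `|r - k|^-1 *: (r - k) - k' = `|r - k|^-1 *: (r - (k + `|r - k| *: k')).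
  by rewrite !scalerBr scalerDr scalerA mulVf ?normr_eq0 // scale1r opprD addrA.
by rewrite normrZ normfV normr_id ler_pdivlMl // mulr1; apply/kmin/kerDZ.
Qed.

Lemma far_units_compact : compact far_units.
Proof.
apply: bounded_closed_compact.
  by apply: (@bounded_in_ball _ _ 1) => v [h _]; rewrite /= h.
have -> : far_units = [set u : E | `|u| = 1] `&`
    \bigcap_(k in [set k | p k = 0]) [set u : E | 1 <= `|u - k|].
  by apply/seteqP; split => u [h1 h2]; split => // k /h2.
apply: closedI.
  have -> : [set u : E | `|u| = 1] = (fun u : E => `|u|) @^-1` [set 1] by [].
  apply: (continuous_closedP _).1; last exact: closed_eq.
  by move=> v; exact: norm_continuous.
apply: closed_bigI => k _.
have -> : [set u : E | 1 <= `|u - k|] = [set u : E | 1 <= `|k - u|].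
  by apply/seteqP; split => u /=; rewrite distrC.
exact: closed_far_from.
Qed.

Lemma seminorm_coercive :
  exists2 c, 0 < c & forall r, exists2 k, p k = 0 & c * `|r - k| <= p r.
Proof.
have bound c r : (forall u, far_units u -> c <= p u) ->
    exists2 k, p k = 0 & c * `|r - k| <= p r.
  move=> hc; have [k pk kmin] := nearest_ker r; exists k => //.
  have [->|nz] := eqVneq (r - k) 0; first by rewrite normr0 mulr0 seminorm_ge0.
  have t0 : 0 < `|r - k| by rewrite normr_gt0.
  have := hc _ (far_units_residual pk kmin nz).
  rewrite pZ normfV normr_id ler_pdivlMl // => h.
  by rewrite mulrC; apply: le_trans h _; rewrite (@seminormDker (- k)) ?seminormN.
case: (pselect (far_units !=set0)) => [Z0|Zn]; last first.
  by exists 1 => // r; apply: bound => u Zu; exfalso; apply: Zn; exists u.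
have pc : continuous p := lipschitz_continuous L_ge0 seminorm_lipschitz.
have [z zZ zmin] := EVT_min_rV Z0 far_units_compact (continuous_subspaceT pc).
move: zZ; rewrite inE => zZ.
have m0 : 0 < p z.
  rewrite lt_def seminorm_ge0 andbT; apply/eqP => pz.
  by have := zZ.2 z pz; rewrite subrr normr0 ler10.
by exists (p z) => // r; apply: bound => u Zu; apply: zmin; rewrite inE.
Qed.

Variable psi : E -> R.
Hypothesis psiL : forall r s, `|psi r - psi s| <= L * `|r - s|.
Hypothesis psi_le : forall r, psi r <= p r.
Hypothesis psiDker : forall r k, p k = 0 -> psi (r + k) = psi r.

Definition far_from_peaks (M eps : R) := [set r : E | [/\ `|r| <= M, p r = 1 &
   forall s, p s = 1 -> psi s = 1 -> eps <= `|s - r|]].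

Lemma far_from_peaks_compact M eps : compact (far_from_peaks M eps).
Proof.
apply: bounded_closed_compact; first by apply: (@bounded_in_ball _ _ M) => v [].
have -> : far_from_peaks M eps = ([set v : E | `|v| <= M] `&` p @^-1` [set 1]) `&`
    \bigcap_(s in [set s | p s = 1 /\ psi s = 1]) [set r : E | eps <= `|s - r|].
  apply/seteqP; split => u.
    by case=> h1 h2 h3; split; [split|move=> s [] /h3 h /h].
  by case=> -[h1 h2] h3; split => // s ps qs; exact: h3.
apply: closedI; first apply: closedI.
- exact: closed_ball_norm.
- apply: (continuous_closedP p).1; last exact: closed_eq.
  exact: lipschitz_continuous L_ge0 seminorm_lipschitz.
- by apply: closed_bigI => s _; exact: closed_far_from.
Qed.

(* psi < 1 on that compact set, hence psi <= 1 - eta there for some eta > 0. *)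
Lemma far_from_peaks_gap M eps : 0 < eps ->
  exists2 eta, 0 < eta & forall r, 1 - eta < psi r -> ~ far_from_peaks M eps r.
Proof.
move=> eps0; case: (pselect (far_from_peaks M eps !=set0)) => [Q0|Qn]; last first.
  by exists 1 => // r _ Qr; apply: Qn; exists r.
have psic : continuous psi := lipschitz_continuous L_ge0 psiL.
have [q qQ qmax] := EVT_max_rV Q0 (@far_from_peaks_compact M eps) (continuous_subspaceT psic).
move: qQ; rewrite inE => -[q1 q2 q3].
have lt1 : psi q < 1.
  rewrite lt_def -q2 psi_le andbT; apply/eqP => h.
  by have := q3 q q2 (etrans (esym h) q2); rewrite subrr normr0 leNgt eps0.
exists (1 - psi q); first by rewrite subr_gt0.
move=> r; rewrite opprB addrC subrK => h Qr.
by have := qmax r; rewrite inE => /(_ Qr); rewrite leNgt h.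
Qed.

Lemma seminorm_peak_stability eps : 0 < eps -> exists2 eta, 0 < eta &
  forall r, p r = 1 -> 1 - eta < psi r ->
    exists s, [/\ p s = 1, psi s = 1 & `|s - r| < eps].
Proof.
move=> eps0; have [c c0 hc] := seminorm_coercive.
have [eta eta0 etaQ] := @far_from_peaks_gap c^-1 eps eps0.
exists eta => // r pr hr.
have [k pk hk] := hc r.
(* r - k is an equivalent representative of r of norm at most 1/c *)
have pr' : p (r - k) = 1 by rewrite seminormDker ?seminormN.
have psir' : psi (r - k) = psi r by have := psiDker (r - k) pk; rewrite subrK.
have nr' : `|r - k| <= c^-1 by rewrite -(ler_pM2l c0) mulfV ?gt_eqF // -pr.
case: (pselect (exists s, [/\ p s = 1, psi s = 1 & `|s - (r - k)| < eps])).
  move=> [s [ps qs ds]]; exists (s + k); split.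
  - by rewrite seminormDker.
  - by rewrite psiDker.
  - by move: ds; rewrite opprB addrA.
move=> ns; exfalso; apply: (etaQ (r - k)); first by rewrite psir'.
split => // s ps qs; rewrite leNgt; apply/negP => ds.
by apply: ns; exists s.
Qed.

End Seminorm.

Section Functionals.
Variable R : realType.
Variable X : normedModType R[i].

Lemma func0 (g : X -> R[i]) : is_bounded_functional g -> g 0 = 0.
Proof.
move=> [glin _].
have := glin 1 0 0; rewrite scaler0 addr0 mul1r => /(congr1 (fun z => z - g 0)).
by rewrite subrr addrK => h; apply/esym.
Qed.

Lemma funcD (g : X -> R[i]) u v : is_bounded_functional g -> g (u + v) = g u + g v.
Proof. by move=> [glin _]; rewrite -{1}[u]scale1r glin mul1r. Qed.

Lemma funcZ (g : X -> R[i]) a u : is_bounded_functional g -> g (a *: u) = a * g u.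
Proof. by move=> hg; rewrite -[a *: u]addr0 (proj1 hg) (func0 hg) addr0. Qed.

Lemma funcB (g : X -> R[i]) u v : is_bounded_functional g -> g (u - v) = g u - g v.
Proof. by move=> hg; rewrite funcD // -scaleN1r funcZ // mulN1r. Qed.

Lemma func_bound (g : X -> R[i]) : is_bounded_functional g ->
  forall z, rabsC (g z) <= fnorm g * rnorm z.
Proof.
move=> hg z; have [_ [M hM]] := hg.
have [->|z0] := eqVneq z 0; first by rewrite func0 // rnorm0 mulr0 /rabsC normr0.
have t0 : 0 < rnorm z.
  by rewrite lt_def rnorm_ge0 andbT; apply/eqP => /rnorm_eq0; apply/eqP.
have ti0 : 0 <= (rnorm z)^-1 by rewrite invr_ge0 ltW.
pose w := ((rnorm z)^-1)%:C *: z.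
have nw : rnorm w = 1 by rewrite rnormZ rabsC_real ger0_norm // mulVf ?gt_eqF.
have ub : rabsC (g w) <= fnorm g.
  apply: ub_le_sup; last by exists w => //=; rewrite nw.
  exists `|M| => _ [x hx <-]; apply: le_trans (hM x) _.
  apply: (@le_trans _ _ (`|M| * rnorm x)); first by rewrite ler_wpM2r ?rnorm_ge0 ?ler_norm.
  by rewrite -[X in _ <= X]mulr1 ler_wpM2l.
move: ub; rewrite funcZ // rabsCM rabsC_real ger0_norm // => ub.
by rewrite mulrC -ler_pdivrMl.
Qed.

Lemma inPi_bound (y : X) g : inPi y g -> forall z, rabsC (g z) <= rnorm z.
Proof. by move=> [_ [hg [fg _]]] z; have := func_bound hg z; rewrite fg mul1r. Qed.

Lemma numrad_ub (A : X -> X) M : (forall y, rnorm (A y) <= M * rnorm y) ->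
  forall y g, inPi y g -> rabsC (g (A y)) <= numrad A.
Proof.
move=> hA y g hP; apply: ub_le_sup; last by exists y, g.
exists M => _ [y' [g' [hP' ->]]]; apply: le_trans (inPi_bound hP' _) _.
by have := hA y'; rewrite (proj1 hP') mulr1.
Qed.

Lemma numrad_le (A : X -> X) b : (exists (y : X) (g : X -> R[i]), inPi y g) ->
  (forall y g, inPi y g -> rabsC (g (A y)) <= b) -> numrad A <= b.
Proof.
move=> [y [g hP]] hb; apply: ge_sup; first by exists (rabsC (g (A y))), y, g.
by move=> _ [y' [g' [hP' ->]]]; apply: hb.
Qed.

Lemma lin_sum (T : X -> X) :
  (forall (a : R[i]) (x y : X), T (a *: x + y) = a *: T x + T y) ->
  forall m (c : 'I_m -> R[i]) (v : 'I_m -> X),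
  T (\sum_(j < m) c j *: v j) = \sum_(j < m) c j *: T (v j).
Proof.
move=> hT m c v.
have T0 : T 0 = 0.
  have := hT 1 0 0; rewrite scaler0 addr0 scale1r => /(congr1 (fun z => z - T 0)).
  by rewrite subrr addrK => h; apply/esym.
apply: (big_ind2 (fun a b => T a = b)) => //.
  by move=> a b a' b' <- <-; rewrite -{1}[a]scale1r hT scale1r.
by move=> j _; rewrite -[_ *: v j]addr0 hT T0 addr0.
Qed.

End Functionals.

Section Basis.
Variable R : realType.
Variable X : normedModType R[i].

Definition spans n (e : 'I_n -> X) :=
  forall x : X, exists c : 'I_n -> R[i], x = \sum_(i < n) c i *: e i.
Definition indep n (e : 'I_n -> X) :=
  forall c : 'I_n -> R[i], \sum_(i < n) c i *: e i = 0 -> forall i, c i = 0.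

(* Dropping a vector with nonzero coefficient in a vanishing combination keeps
   a spanning family; iterate until the family is independent. *)
Lemma basis_exists : finite_dim X ->
  exists n (e : 'I_n -> X), spans e /\ indep e.
Proof.
move=> [s hs].
suff H : forall m n (e : 'I_n -> X), (n <= m)%N -> spans e ->
    exists n (e : 'I_n -> X), spans e /\ indep e.
  by apply: (H (size s) (size s) (fun i => s`_i)).
elim=> [|m IH] n e hn sp.
  exists n, e; split => // c _ [i hi]; exfalso.
  by move: hn hi; rewrite leqn0 => /eqP ->.
case: (pselect (indep e)) => [ind|nind]; first by exists n, e.
have [c [hc [j cj]]] :
    exists c : 'I_n -> R[i], \sum_(i < n) c i *: e i = 0 /\ exists j, c j != 0.
  apply: contrapT => hn'; apply: nind => c hc i.
  apply/eqP; apply: contrapT => /negP ci; apply: hn'.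
  by exists c; split => //; exists i.
apply: (IH n.-1 (fun i => e (lift j i))).
  by rewrite -ltnS prednK // (leq_ltn_trans (leq0n j) (ltn_ord j)).
move=> x; have [d ->] := sp x.
exists (fun i => d (lift j i) - d j / c j * c (lift j i)).
rewrite (bigD1_ord j) //=.
have ej : e j = - (c j)^-1 *: \sum_(i < n.-1) c (lift j i) *: e (lift j i).
  move: hc; rewrite (bigD1_ord j) //= => /eqP; rewrite addr_eq0 => /eqP h.
  by rewrite scaleNr -scalerN -h scalerA mulVf // scale1r.
rewrite ej scalerA scaler_sumr -big_split /=.
by apply: eq_bigr => i _; rewrite scalerA -scalerDl mulrN addrC mulNr.
Qed.

End Basis.

Lemma entry_le (R : realType) n (v : 'rV[R]_n) i : `|v ord0 i| <= `|v|.
Proof.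
have /mapP[j Hj ->] : `|v ord0 i| \in [seq `|v x.1 x.2| | x : 'I_1 * 'I_n].
  by apply/mapP; exists (ord0, i) => //=; rewrite mem_enum.
by rewrite [leRHS]/Num.norm /= mx_normrE; apply/bigmax_geP; right => /=; exists j.
Qed.

(* A family of complex numbers indexed by a finite type I is encoded as a real
   row vector holding the real and imaginary parts. *)
Section Encoding.
Variable R : realType.
Variable I : finType.
Local Notation V := 'rV[R]_#|{: I * bool}|.

Definition ridx (i : I) (b : bool) : 'I_#|{: I * bool}| := enum_rank (i, b).

Definition cz (r : V) (i : I) : R[i] :=
  (r ord0 (ridx i false)) +i* (r ord0 (ridx i true)).

Definition enc (c : I -> R[i]) : V :=
  \row_k (if (enum_val k).2 then complex.Im (c (enum_val k).1)
          else complex.Re (c (enum_val k).1)).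

Lemma cz_enc c i : cz (enc c) i = c i.
Proof. by rewrite /cz /enc /ridx !mxE !enum_rankK /=; case: (c i). Qed.

Lemma czD r s i : cz (r + s) i = cz r i + cz s i.
Proof. by rewrite /cz !mxE. Qed.

Lemma czZ (a : R) r i : cz (a *: r) i = a%:C * cz r i.
Proof. by rewrite /cz !mxE /=; simpc. Qed.

Lemma cz_bound r i : rabsC (cz r i) <= 2 * `|r|.
Proof.
apply: le_trans (rabsC_ReIm _) _.
by rewrite /cz /= mulr2n mulrDl mul1r lerD ?entry_le.
Qed.

Lemma cz_eq0 r : (forall i, cz r i = 0) -> r = 0.
Proof.
move=> h; apply/rowP => k; rewrite !mxE -(enum_valK k).
case: (enum_val k) => i b; have := h i; rewrite /cz /ridx => -[h1 h2].
by case: b; rewrite ?h1 ?h2.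
Qed.

End Encoding.

Section Coordinates.
Variable R : realType.
Variable X : normedModType R[i].
Variables (n : nat) (e : 'I_n -> X).
Hypotheses (espan : spans e) (eind : indep e).

Definition coord (x : X) : 'I_n -> R[i] := projT1 (cid (espan x)).

Lemma coordE x : x = \sum_(i < n) coord x i *: e i.
Proof. exact: (projT2 (cid (espan x))). Qed.

Lemma coord_uniq x c : x = \sum_(i < n) c i *: e i -> coord x = c.
Proof.
move=> hx; apply/funext => i; apply/eqP; rewrite -subr_eq0; apply/eqP.
move: i; apply: eind.
under eq_bigr do rewrite scalerBl.
by rewrite sumrB -coordE -hx subrr.
Qed.

Lemma coordD (a : R[i]) x y : coord (a *: x + y) = fun i => a * coord x i + coord y i.
Proof.
apply: coord_uniq; under eq_bigr do rewrite scalerDl -scalerA.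
by rewrite big_split /= -scaler_sumr -!coordE.
Qed.

(* The coordinates are bounded by the norm: r |-> ||sum_i cz r i e_i|| is a
   seminorm on the real encodings whose kernel is trivial by independence,
   so it is coercive. *)
Lemma coord_bound :
  exists2 C1, 0 < C1 & forall x i, rabsC (coord x i) <= C1 * rnorm x.
Proof.
pose p (r : 'rV[R]_#|{: 'I_n * bool}|) := rnorm (\sum_(i < n) cz r i *: e i).
pose L := \sum_(i < n) 2 * rnorm (e i).
have L0 : 0 <= L by apply: sumr_ge0 => i _; rewrite mulr_ge0 ?rnorm_ge0.
have pD r s : p (r + s) <= p r + p s.
  rewrite /p; under eq_bigr do rewrite czD scalerDl.
  by rewrite big_split /=; apply: rnormD.
have pZ (a : R) r : p (a *: r) = `|a| * p r.
  rewrite /p; under eq_bigr do rewrite czZ -scalerA.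
  by rewrite -scaler_sumr rnormZ rabsC_real.
have pL r : p r <= L * `|r|.
  apply: le_trans (rnorm_sum _) _.
  rewrite /L mulr_suml; apply: ler_sum => i _.
  by rewrite rnormZ mulrAC ler_wpM2r ?rnorm_ge0 ?cz_bound.
have [c c0 hc] := seminorm_coercive L0 pD pZ pL.
exists (2 / c); first by rewrite divr_gt0.
move=> x i; pose r := enc (coord x).
have pr : p r = rnorm x.
  by rewrite /p; under eq_bigr do rewrite cz_enc; rewrite -coordE.
have [k pk hk] := hc r.
have k0 : k = 0.
  by apply: cz_eq0 => j; move: j; apply: eind; apply: rnorm_eq0.
move: hk; rewrite k0 subr0 pr => hk.
rewrite -(cz_enc (coord x) i) -/r; apply: le_trans (cz_bound _ _) _.
by rewrite -mulrA ler_pM2l // ler_pdivlMl.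
Qed.

End Coordinates.

Section Operators.
Variable R : realType.
Variable X : normedModType R[i].
Variables (n : nat) (e : 'I_n -> X).
Hypotheses (espan : spans e) (eind : indep e).
Variable C1 : R.
Hypothesis C1_gt0 : 0 < C1.
Hypothesis hC1 : forall x i, rabsC (coord espan x i) <= C1 * rnorm x.

Local Notation V := 'rV[R]_#|{: 'I_n * 'I_n * bool}|.

Definition col (r : V) (j : 'I_n) : X := \sum_(i < n) cz r (i, j) *: e i.
Definition Phi (r : V) (y : X) : X := \sum_(j < n) coord espan y j *: col r j.

Lemma PhiD r s y : Phi (r + s) y = Phi r y + Phi s y.
Proof.
rewrite /Phi -big_split /=; apply: eq_bigr => j _.
by rewrite /col -scalerDr -big_split /=; congr (_ *: _); apply: eq_bigr => i _;
  rewrite czD scalerDl.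
Qed.

Lemma PhiZ (a : R) r y : Phi (a *: r) y = a%:C *: Phi r y.
Proof.
rewrite /Phi scaler_sumr; apply: eq_bigr => j _.
rewrite /col !scaler_sumr; apply: eq_bigr => i _.
by rewrite czZ !scalerA; congr (_ *: _); ring.
Qed.

Lemma PhiB r s y : Phi (r - s) y = Phi r y - Phi s y.
Proof. by rewrite PhiD -scaleN1r PhiZ rmorphN1 scaleN1r. Qed.

Lemma Phi_lin r (a : R[i]) x y : Phi r (a *: x + y) = a *: Phi r x + Phi r y.
Proof.
rewrite /Phi (coordD espan eind) scaler_sumr -big_split /=; apply: eq_bigr => j _.
by rewrite scalerDl scalerA.
Qed.

Lemma Phi_repr (T : X -> X) : is_bounded_op T ->
  T = Phi (enc (fun ij : 'I_n * 'I_n => coord espan (T (e ij.2)) ij.1)).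
Proof.
move=> [Tlin _]; apply/funext => y.
rewrite /Phi {1}(coordE espan y) lin_sum //.
apply: eq_bigr => j _; congr (_ *: _).
by rewrite /col; under eq_bigr do rewrite cz_enc /=; rewrite -coordE.
Qed.

Definition Kop := C1 * (\sum_(i < n) 2 * rnorm (e i)) * n%:R.

Lemma Kop_ge0 : 0 <= Kop.
Proof.
have B0 : 0 <= \sum_(i < n) 2 * rnorm (e i).
  by apply: sumr_ge0 => i _; rewrite mulr_ge0 ?rnorm_ge0.
by rewrite /Kop !mulr_ge0 // ltW.
Qed.

Lemma Phi_bound r y : rnorm (Phi r y) <= Kop * `|r| * rnorm y.
Proof.
pose B := \sum_(i < n) 2 * rnorm (e i).
have col_bound j : rnorm (col r j) <= B * `|r|.
  apply: le_trans (rnorm_sum _) _; rewrite /B mulr_suml; apply: ler_sum => i _.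
  by rewrite rnormZ mulrAC ler_wpM2r ?rnorm_ge0 ?cz_bound.
apply: le_trans (rnorm_sum _) _.
apply: (@le_trans _ _ (\sum_(j < n) (C1 * rnorm y) * (B * `|r|))).
  by apply: ler_sum => j _; rewrite rnormZ ler_pM ?rabsC_ge0 ?rnorm_ge0.
rewrite sumr_const card_ord -mulr_natr /Kop -/B.
suff -> : C1 * rnorm y * (B * `|r|) * n%:R = C1 * B * n%:R * `|r| * rnorm y by [].
ring.
Qed.

Lemma Phi_bounded r : is_bounded_op (Phi r).
Proof. by split; [exact: Phi_lin | exists (Kop * `|r|) => y; apply: Phi_bound]. Qed.

Lemma opnorm_Phi r s : opnorm (fun y => Phi s y - Phi r y) <= Kop * `|s - r|.
Proof.
apply: ge_sup; first by exists (rnorm (Phi s 0 - Phi r 0)), 0 => //=; rewrite rnorm0 ler01.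
move=> _ [y hy <-]; rewrite -PhiB; apply: le_trans (Phi_bound _ _) _.
by rewrite -[X in _ <= X]mulr1 ler_wpM2l // mulr_ge0 ?Kop_ge0.
Qed.

Variables (x0 : X) (f0 : X -> R[i]).
Hypothesis x0f0 : inPi x0 f0.

Let Pi_nonempty : exists (y : X) (g : X -> R[i]), inPi y g.
Proof. by exists x0, f0. Qed.

Let f0_bounded : is_bounded_functional f0.
Proof. exact: x0f0.2.1. Qed.

Lemma numrad_Phi_ub r y g : inPi y g -> rabsC (g (Phi r y)) <= numrad (Phi r).
Proof. exact: (numrad_ub (Phi_bound r)). Qed.

Lemma numrad_PhiD r s : numrad (Phi (r + s)) <= numrad (Phi r) + numrad (Phi s).
Proof.
apply: (numrad_le Pi_nonempty) => y g hyg; rewrite PhiD funcD; last exact: hyg.2.1.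
by apply: le_trans (rabsCD _ _) _; apply: lerD; apply: numrad_Phi_ub.
Qed.

Lemma numrad_PhiZ (a : R) r : numrad (Phi (a *: r)) = `|a| * numrad (Phi r).
Proof.
have le a' r' : numrad (Phi (a' *: r')) <= `|a'| * numrad (Phi r').
  apply: (numrad_le Pi_nonempty) => y g hyg; rewrite PhiZ funcZ; last exact: hyg.2.1.
  by rewrite rabsCM rabsC_real ler_wpM2l // numrad_Phi_ub.
apply/eqP; rewrite eq_le le /=.
have [->|a0] := eqVneq a 0.
  by rewrite normr0 mul0r; apply: le_trans (rabsC_ge0 _) (numrad_Phi_ub _ x0f0).
have := le a^-1 (a *: r); rewrite scalerA mulVf // scale1r normfV => h.
by rewrite -ler_pdivlMl ?normr_gt0.
Qed.

Lemma numrad_Phi_le r : numrad (Phi r) <= Kop * `|r|.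
Proof.
apply: (numrad_le Pi_nonempty) => y g hyg; apply: le_trans (inPi_bound hyg _) _.
by have := Phi_bound r y; rewrite hyg.1 mulr1.
Qed.

Lemma peak_Phi_lipschitz r s :
  `|rabsC (f0 (Phi r x0)) - rabsC (f0 (Phi s x0))| <= Kop * `|r - s|.
Proof.
apply: le_trans (rabsC_dist _ _) _; rewrite -(funcB _ _ f0_bounded) -PhiB.
apply: le_trans (inPi_bound x0f0 _) _.
by have := Phi_bound (r - s) x0; rewrite x0f0.1 mulr1.
Qed.

Lemma peak_PhiDker r k : numrad (Phi k) = 0 ->
  rabsC (f0 (Phi (r + k) x0)) = rabsC (f0 (Phi r x0)).
Proof.
move=> pk; rewrite PhiD (funcD _ _ f0_bounded).
have /rabsC_eq0 -> : rabsC (f0 (Phi k x0)) = 0.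
  by apply/eqP; rewrite eq_le rabsC_ge0 andbT -pk numrad_Phi_ub.
by rewrite addr0.
Qed.

Lemma Lpp_nu_at eps : 0 < eps -> exists eta : R, 0 < eta /\
  forall T : X -> X, is_bounded_op T -> numrad T = 1 ->
    rabsC (f0 (T x0)) > 1 - eta ->
    exists S : X -> X, [/\ is_bounded_op S, numrad S = 1,
      rabsC (f0 (S x0)) = 1 & opnorm (fun y => S y - T y) < eps].
Proof.
move=> eps0; have K0 := Kop_ge0.
have eps1 : 0 < eps / (Kop + 1) by rewrite divr_gt0 // ltr_wpDl.
have [eta eta0 H] := seminorm_peak_stability K0 numrad_PhiD numrad_PhiZ
  numrad_Phi_le peak_Phi_lipschitz (fun r => numrad_Phi_ub r x0f0) peak_PhiDker eps1.
exists eta; split => // T hT nT fT.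
move: (Phi_repr hT) nT fT; set r := enc _ => -> nT fT.
have [s [ps qs ds]] := H r nT fT.
exists (Phi s); split => //; first exact: Phi_bounded.
apply: le_lt_trans (opnorm_Phi r s) _; apply: le_lt_trans (ler_wpM2l K0 (ltW ds)) _.
by rewrite mulrA ltr_pdivrMr ?ltr_wpDl // mulrC ltr_pM2l // ltrDl.
Qed.

End Operators.

Unset Implicit Arguments.
Theorem corollary3p4 (R : realType) (X : completeNormedModType R[i]) :
  finite_dim X -> Lpp_nu X.
Proof.
move=> fdim eps eps0 x0 f0 x0f0.
have [n [e [espan eind]]] := basis_exists fdim.
have [C1 C1_gt0 hC1] := coord_bound espan eind.
exact: (@Lpp_nu_at R X n e espan eind C1 C1_gt0 hC1 x0 f0 x0f0 eps eps0).
Qed.
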